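(* Let $P$ be a domain and $D\ge 2$ an integer. Let $C\subseteq P$ be a comb with root $p$, where $p$ is a boundary pixel of $P$, and suppose that $\mathrm{vdist}(q)=1+|x_q-x_p|+|y_q-y_p|$ for every $q\in C$, where $(x_q,y_q)$ denotes the lower-left corner of pixel $q$. Suppose each pixel of $C\setminus\{p\}$ carries exactly one unit of snow, $p$ carries none, and the snowblower stands on $p$. Let $\Delta=\frac1D\sum_{q\in C\setminus\{p\}}\mathrm{vdist}(q)$. Then in the default model there is a sequence of moves obeying the capacity constraint, in which the snowblower only visits pixels of $C$ and snow is only thrown onto pixels of $C$ or out of $P$, which ends with the snowblower on $p$ and no pixel of $C$ carrying snow, and whose number of moves is at most $4|C\setminus\{p\}|+4\Delta$ if $D\ge4$ and at most $4|C\setminus\{p\}|+2\Delta$ if $D\in\{2,3\}$.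
   Context: A pixel is a closed unit square $[i,i+1]\times[j,j+1]$, $i,j\in\mathbb{Z}$, identified with its lower-left corner $(i,j)$; two pixels are adjacent if they share a side. The domain $P$ is a finite set of pixels whose dual graph $G_P$ (vertex per pixel, edges between adjacent pixels) is connected. A boundary side is a side of a pixel of $P$ not shared with another pixel of $P$; a boundary pixel is a pixel of $P$ with a boundary side. For $q\in P$, $\mathrm{vdist}(q)=1+\min_{b}\mathrm{dist}_{G_P}(q,b)$, the minimum over boundary pixels $b$ of $P$. A (horizontal) comb is a set of pixels of the form $C=\{(x,y): y_0\le y\le y_0+H-1,\ a_y\le x\le c\}$ (a leftward comb) or $C=\{(x,y): y_0\le y\le y_0+H-1,\ c\le x\le a_y\}$ (a rightward comb), for integers $y_0$, $H\ge1$, $c$ and $a_y$ ($a_y\le c$, resp. $a_y\ge c$); its handle is the column $\{(c,y): y_0\le y\le y_0+H-1\}$, its teeth are the rows, and its root is either $(c,y_0)$ or $(c,y_0+H-1)$. A move (default model): the snowblower goes from its pixel $v$ to an adjacent pixel $u\in P$, and upon entering $u$ all snow on $u$ is thrown onto any chosen one of the four pixels adjacent to $u$ (including $v$); if that pixel is not in $P$ the snow disappears, otherwise it is added to the snow there. Capacity constraint: at all times every pixel of $P$ carries at most $D$ units of snow. *)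

From mathcomp Require Import all_boot all_order all_algebra.
Set Implicit Arguments. Unset Strict Implicit. Unset Printing Implicit Defensive.
Import Order.TTheory GRing.Theory Num.Theory.

(* A pixel [i,i+1]x[j,j+1] is identified with its lower-left corner (i,j). *)
Definition pixel := (int * int)%type.

Definition adj (a b : pixel) : bool :=
  (absz (a.1 - b.1)%R + absz (a.2 - b.2)%R == 1)%N.

Definition nbrs (a : pixel) : seq pixel :=
  [:: (a.1 + 1, a.2); (a.1 - 1, a.2); (a.1, a.2 + 1); (a.1, a.2 - 1)]%R.

Definition connected_dom (P : seq pixel) : Prop :=
  forall a b, a \in P -> b \in P ->
    exists w : seq pixel, [/\ path adj a w, all (mem P) w & last a w = b].

Definition boundary_pixel (P : seq pixel) (q : pixel) : bool :=
  (q \in P) && has (fun r => r \notin P) (nbrs q).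

(* BFS layers: layer P k = pixels q of P with min_b dist_{G_P}(q,b) <= k,
   b ranging over boundary pixels of P *)
Fixpoint layer (P : seq pixel) (k : nat) : seq pixel :=
  match k with
  | 0 => [seq q <- P | boundary_pixel P q]
  | k'.+1 => let L := layer P k' in [seq q <- P | (q \in L) || has (adj q) L]
  end.

(* vdist(q) = 1 + min_b dist_{G_P}(q,b); the minimal distance is the least k
   with q in layer P k (it is < size P for q in a connected P). *)
Definition vdist (P : seq pixel) (q : pixel) : nat :=
  (find (fun k => q \in layer P k) (iota 0 (size P))).+1.

(* membership in the horizontal comb with parameters y0, H, c, a;
   [left] = true for a leftward comb, false for a rightward comb *)
Definition in_comb (left : bool) (y0 : int) (H : nat) (c : int) (a : int -> int)
  (q : pixel) : bool :=
  [&& (y0 <= q.2)%R, (q.2 <= y0 + H%:Z - 1)%R &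
      (if left then (a q.2 <= q.1)%R && (q.1 <= c)%R
       else (c <= q.1)%R && (q.1 <= a q.2)%R)].

Definition is_comb (C : pred pixel) (p : pixel) : Prop :=
  exists (left : bool) (y0 : int) (H : nat) (c : int) (a : int -> int),
    [/\ (0 < H)%N,
        (forall y : int, (y0 <= y)%R -> (y <= y0 + H%:Z - 1)%R ->
           if left then (a y <= c)%R else (c <= a y)%R),
        C =1 in_comb left y0 H c a &
        (p = (c, y0) \/ p = (c, y0 + H%:Z - 1)%R)].

(* state: position of the snowblower and amount of snow on each pixel *)
Definition state := (pixel * (pixel -> nat))%type.

(* a move (u,t): go to u, throw all snow of u onto the pixel t (adjacent to u);
   if t is not in P the snow disappears *)
Definition move := (pixel * pixel)%type.

Definition step (P : seq pixel) (st : state) (m : move) : state :=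
  (m.1, fun x => if x == m.1 then 0%N
                 else if (x == m.2) && (m.2 \in P) then (st.2 x + st.2 m.1)%N
                 else st.2 x).

Definition legal (P : seq pixel) (D : nat) (C : pred pixel) (st : state) (m : move)
  : Prop :=
  [/\ adj st.1 m.1, m.1 \in P, m.2 \in nbrs m.1, C m.1 & C m.2 \/ m.2 \notin P]
  /\ (forall x, x \in P -> ((step P st m).2 x <= D)%N).

Fixpoint valid_run (P : seq pixel) (D : nat) (C : pred pixel) (st : state)
  (ms : seq move) : Prop :=
  match ms with
  | [::] => True
  | m :: ms' => legal P D C st m /\ valid_run P D C (step P st m) ms'
  end.

Definition run (P : seq pixel) (st : state) (ms : seq move) : state :=
  foldl (step P) st ms.

(* |C \ {p}| and Delta = (1/D) sum_{q in C\{p}} vdist(q), for C contained in P *)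
Definition comb_rest_size (P : seq pixel) (C : pred pixel) (p : pixel) : nat :=
  size [seq q <- undup P | C q && (q != p)].

Definition Delta (P : seq pixel) (C : pred pixel) (p : pixel) (D : nat) : rat :=
  ((\sum_(q <- undup P | C q && (q != p)) (vdist P q)%:R) / D%:R)%R.

From mathcomp Require Import all_boot all_order all_algebra.
From mathcomp Require Import zify ring lra.
From Stdlib Require Import Logic.FunctionalExtensionality.
Import Order.TTheory GRing.Theory Num.Theory.
Set Implicit Arguments. Unset Strict Implicit. Unset Printing Implicit Defensive.

(* The snowblower clears the comb by round trips from the root [p]: each trip is a depth-first
   sweep of a tree of cells that pushes the snow back towards [p], which throws it out of the
   domain through one of its boundary sides.  A trip through [m] cells besides [p] takes [2 m]
   moves and may carry [D] units of snow.  The cleared cells always form a prefix of every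
   tooth.  First the heads of the teeth are cleared in reading order, the head of a tooth of
   length [l] being its first [(l - 1) mod D + 1] cells: a first trip clears the remainder of
   their total modulo [D], every later one exactly [D] cells.  Afterwards every tooth has a
   multiple of [D] cells left, which are cleared [D] at a time.  In both phases, [D] times the
   length of a trip is at most twice the decrease of the potential
   [2 D * (snow left) + (sum of vdist over the snow left)], so that there are at most
   [4 |C \ {p}| + 2 Delta] moves in total, whatever [D]. *)

Lemma adj_sym a b : adj a b = adj b a.
Proof. by rewrite /adj; apply/eqP/eqP; lia. Qed.

Lemma adj_mem_nbrs a b : adj a b -> b \in nbrs a.
Proof. by case: a b => [a1 a2] [b1 b2]; rewrite /adj /nbrs !inE !xpair_eqE /= => /eqP; lia. Qed.

Lemma mem_nbrs_neq a b : b \in nbrs a -> b != a.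
Proof. by case: a b => [a1 a2] [b1 b2]; rewrite /nbrs !inE !xpair_eqE /=; lia. Qed.

Lemma run_cat P st ms1 ms2 : run P st (ms1 ++ ms2) = run P (run P st ms1) ms2.
Proof. by rewrite /run foldl_cat. Qed.

Lemma valid_run_cat P D C st ms1 ms2 :
  valid_run P D C st (ms1 ++ ms2) <->
  valid_run P D C st ms1 /\ valid_run P D C (run P st ms1) ms2.
Proof. by elim: ms1 st => [|m ms1 IH] st /=; [tauto | rewrite IH /run /=; tauto]. Qed.

(* Forests of pixels in first-child / next-sibling encoding: [Node r k s] is a
   tree with root [r] and child forest [k], followed by the sibling forest [s]. *)
Inductive forest := Leaf | Node of pixel & forest & forest.

Fixpoint nodes (t : forest) : seq pixel :=
  if t is Node r k s then r :: nodes k ++ nodes s else [::].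

Fixpoint fcat (t1 t2 : forest) : forest :=
  if t1 is Node r k s then Node r k (fcat s t2) else t2.

Lemma nodes_tree r k : nodes (Node r k Leaf) = r :: nodes k.
Proof. by rewrite /= cats0. Qed.

Lemma nodes_fcat t1 t2 : nodes (fcat t1 t2) = nodes t1 ++ nodes t2.
Proof. by elim: t1 => //= r k _ s ->; rewrite catA. Qed.

(* with [u] added as a root, [t] becomes a tree of the grid graph *)
Fixpoint hangs_from (u : pixel) (t : forest) : bool :=
  if t is Node r k s then [&& adj u r, hangs_from r k & hangs_from u s] else true.

Lemma hangs_from_fcat u t1 t2 :
  hangs_from u (fcat t1 t2) = hangs_from u t1 && hangs_from u t2.
Proof. by elim: t1 => //= r k _ s ->; rewrite !andbA. Qed.

(* Depth-first sweep of [t] from [u]: enter each root, sweep its children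
   towards it, come back to [u] and throw the collected snow onto [w]. *)
Fixpoint sweep (u w : pixel) (t : forest) : seq move :=
  if t is Node r k s then (r, u) :: sweep r u k ++ (u, w) :: sweep u w s else [::].

Lemma size_sweep u w t : size (sweep u w t) = 2 * size (nodes t).
Proof. by elim: t u w => //= r k IHk s IHs u w; rewrite !size_cat /= IHk IHs; lia. Qed.

Lemma sweep_fcat u w t1 t2 : sweep u w (fcat t1 t2) = sweep u w t1 ++ sweep u w t2.
Proof. by elim: t1 u w => //= r k _ s IHs u w; rewrite IHs -catA. Qed.

Section Sweep.
Variables (P : seq pixel) (D : nat) (C : pred pixel).

(* snow lying on [w] and staying in the domain: snow thrown off [P] is lost *)
Definition kept_snow (st : pixel -> nat) (w : pixel) : nat :=
  if w \in P then st w else 0.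

Definition within_capacity (st : pixel -> nat) : Prop :=
  forall x, x \in P -> (st x <= D).

Record sweepable (u w : pixel) (t : forest) : Prop := Sweepable {
  sweepable_uniq : uniq (nodes t);
  sweepable_base : u \notin nodes t;
  sweepable_target : w \notin nodes t;
  sweepable_hangs : hangs_from u t;
  sweepable_nodes : {in nodes t, forall x, C x /\ x \in P};
  sweepable_baseC : C u;
  sweepable_baseP : u \in P;
  sweepable_nbrs : w \in nbrs u;
  sweepable_targetC : C w \/ w \notin P }.

Definition load (u w : pixel) (t : forest) (st : pixel -> nat) : nat :=
  (st u + kept_snow st w + \sum_(x <- nodes t) st x).

Record swept (u w : pixel) (t : forest) (st : pixel -> nat) (fin : state) : Prop := Swept {
  swept_pos : fin.1 = u;
  swept_nodes : {in nodes t, forall x, fin.2 x = 0};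
  swept_other : forall x, x \notin u :: w :: nodes t -> fin.2 x = st x;
  swept_lost : w \notin P -> fin.2 w = st w;
  swept_base : fin.2 u <= st u;
  swept_load : fin.2 u + kept_snow fin.2 w <= load u w t st;
  swept_capacity : within_capacity fin.2 }.

Definition sweeps (u w : pixel) (t : forest) : Prop :=
  forall st, within_capacity st -> load u w t st <= D ->
  valid_run P D C (u, st) (sweep u w t) /\ swept u w t st (run P (u, st) (sweep u w t)).

Lemma sweepable_fcat u w t1 t2 :
  sweepable u w (fcat t1 t2) -> sweepable u w t1 /\ sweepable u w t2.
Proof.
case; rewrite nodes_fcat hangs_from_fcat cat_uniq !mem_cat !negb_or.
move=> /and3P[U1 _ U2] /andP[u1 u2] /andP[w1 w2] /andP[h1 h2] CP Cu Pu wu Cw.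
by split; split=> // x x12; apply: CP; rewrite mem_cat x12 ?orbT.
Qed.

Lemma sweepable_child u w r k : sweepable u w (Node r k Leaf) -> sweepable r u k.
Proof.
case=> /=; rewrite cats0 !inE !negb_or.
move=> /andP[rk Uk] /andP[ur uk] _ /and3P[aur hk _] CP Cu Pu _ _.
have [Cr Pr] : C r /\ r \in P by apply: CP; rewrite inE eqxx.
split=> // [x xk||]; first by apply: CP; rewrite inE xk orbT.
  by rewrite adj_mem_nbrs // adj_sym.
by left.
Qed.

Lemma sweeps_fcat u w t1 t2 :
  sweepable u w (fcat t1 t2) -> sweeps u w t1 -> sweeps u w t2 -> sweeps u w (fcat t1 t2).
Proof.
move=> Sw sw1 sw2 st cap; have [Sw1 Sw2] := sweepable_fcat Sw.
case: Sw; rewrite nodes_fcat cat_uniq => /and3P[_ disj _] _ _ _ _ _ _ _ _.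
have n2_fresh x : x \in nodes t2 -> x \notin u :: w :: nodes t1.
  move=> x2; rewrite !inE !negb_or; apply/and3P; split.
  - by apply: contraNneq (sweepable_base Sw2) => <-.
  - by apply: contraNneq (sweepable_target Sw2) => <-.
  - by apply: contra disj => x1; apply/hasP; exists x.
have n1_fresh x : x \in nodes t1 -> x \notin u :: w :: nodes t2.
  move=> x1; rewrite !inE !negb_or; apply/and3P; split.
  - by apply: contraNneq (sweepable_base Sw1) => <-.
  - by apply: contraNneq (sweepable_target Sw1) => <-.
  - by apply: contra disj => x2; apply/hasP; exists x.
rewrite /load nodes_fcat big_cat /= addnA => loadD.
have [V1 S1] := sw1 st cap (leq_trans (leq_addr _ _) loadD).
set fin1 := run P (u, st) (sweep u w t1) in V1 S1.
have fin1E : fin1 = (u, fin1.2) by rewrite -(swept_pos S1) -surjective_pairing.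
have sum2 : \sum_(x <- nodes t2) fin1.2 x = \sum_(x <- nodes t2) st x.
  by apply: eq_big_seq => x x2; rewrite (swept_other S1 (n2_fresh x x2)).
have [V2 S2] : valid_run P D C (u, fin1.2) (sweep u w t2) /\
               swept u w t2 fin1.2 (run P (u, fin1.2) (sweep u w t2)).
  apply: sw2 (swept_capacity S1) _; rewrite /load sum2.
  by apply: leq_trans loadD; rewrite leq_add2r; exact: swept_load S1.
rewrite sweep_fcat run_cat -/fin1 fin1E.
split; first by apply/valid_run_cat; rewrite -/fin1 fin1E.
split; rewrite ?nodes_fcat; first exact: swept_pos S2.
- move=> x; rewrite mem_cat => /orP[x1|x2]; last exact: (swept_nodes S2 x2).
  by rewrite (swept_other S2 (n1_fresh x x1)) (swept_nodes S1).
- move=> x; rewrite !inE mem_cat !negb_or => /and4P[xu xw x1 x2].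
  by rewrite (swept_other S2) ?(swept_other S1) // !inE !negb_or; apply/and3P.
- by move=> wP; rewrite (swept_lost S2) // (swept_lost S1).
- exact: leq_trans (swept_base S2) (swept_base S1).
- apply: leq_trans (swept_load S2) _.
  by rewrite /load nodes_fcat big_cat /= sum2 addnA leq_add2r; exact: swept_load S1.
- exact: swept_capacity S2.
Qed.

Lemma step_snow st v r t x :
  (step P (v, st) (r, t)).2 x = if x == r then 0 else if (x == t) && (t \in P) then st x + st r
                                else st x.
Proof. by []. Qed.

Lemma enter_child u w r k st :
  sweepable u w (Node r k Leaf) -> within_capacity st -> load u w (Node r k Leaf) st <= D ->
  [/\ legal P D C (u, st) (r, u), within_capacity (step P (u, st) (r, u)).2
    & load r u k (step P (u, st) (r, u)).2 = st u + st r + \sum_(x <- nodes k) st x].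
Proof.
case=> /=; rewrite cats0 !inE !negb_or => /andP[rk _] /andP[ur uk] _ /and3P[aur _ _] CP Cu Pu _ _.
have [Cr Pr] : C r /\ r \in P by apply: CP; rewrite inE eqxx.
move=> cap; rewrite /load nodes_tree big_cons => loadD.
have cap1 : within_capacity (step P (u, st) (r, u)).2.
  move=> x xP; rewrite step_snow Pu andbT; case: eqP => // _; case: eqP => [->|_]; last exact: cap.
  by move: loadD; clear; lia.
split=> //; first by split=> //; split=> //; [rewrite adj_mem_nbrs // adj_sym | left].
rewrite /load /kept_snow Pu /= eqxx (negbTE ur) eqxx /=; congr (_ + _).
by apply: eq_big_seq => x xk; rewrite (negbTE (memPn rk x xk)) (negbTE (memPn uk x xk)).
Qed.

Lemma sweeps_tree u w r k :
  sweepable u w (Node r k Leaf) -> sweeps r u k -> sweeps u w (Node r k Leaf).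
Proof.
move=> Sw swk st cap loadD; have [legal1 cap1 load1] := enter_child Sw cap loadD.
case: Sw => /= + + + /and3P[aur _ _] _ Cu Pu wu Cw.
rewrite cats0 !inE !negb_or => /andP[rk _] /andP[ur uk] /andP[wr wk].
have wu' : w != u := mem_nbrs_neq wu.
move: loadD; rewrite /load nodes_tree big_cons => loadD.
set st1 := (step P (u, st) (r, u)).2 in cap1 load1.
have [Vk Sk] := swk st1 cap1 (ltac:(by rewrite load1; move: loadD; clear; lia)).
set fin := run P (r, st1) (sweep r u k) in Vk Sk.
have finE : fin = (r, fin.2) by rewrite -(swept_pos Sk) -surjective_pairing.
have fin_r : fin.2 r = 0 by have := swept_base Sk; rewrite /st1 step_snow eqxx leqn0 => /eqP.
have fin_w : fin.2 w = st w.
  by rewrite (swept_other Sk) /st1 ?step_snow ?(negbTE wr) ?(negbTE wu') // !inE !negb_or wr wu' wk.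
have fin_u : fin.2 u <= st u + st r + \sum_(x <- nodes k) st x.
  by rewrite -load1; apply: leq_trans (swept_load Sk); rewrite /kept_snow Pu leq_addl.
set st3 := (step P (r, fin.2) (u, w)).2.
have cap3 : within_capacity st3.
  move=> x xP; rewrite /st3 step_snow; case: eqP => // _.
  case: ifP => [/andP[/eqP -> wP]|_]; last exact: swept_capacity Sk x xP.
  by move: loadD fin_u; rewrite fin_w /kept_snow wP; clear; lia.
split.
  split=> //; apply/(valid_run_cat P D C); rewrite -/st1 -/fin finE; split=> //=.
  by split=> //; split=> //; rewrite adj_sym.
have -> : run P (step P (u, st) (r, u)) (sweep r u k ++ [:: (u, w)]) = (u, st3).
  by rewrite run_cat -/st1 -/fin finE.
split=> //; rewrite ?nodes_tree /= /st3.
- move=> x; rewrite inE => /orP[/eqP ->|xk].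
    by rewrite step_snow ![r == _]eq_sym (negbTE ur) (negbTE wr) fin_r.
  by rewrite step_snow (negbTE (memPn uk x xk)) (negbTE (memPn wk x xk)) (swept_nodes Sk).
- move=> x; rewrite !inE !negb_or => /and4P[xu xw xr xk].
  rewrite step_snow (negbTE xu) (negbTE xw) (swept_other Sk) /st1
    ?step_snow ?(negbTE xr) ?(negbTE xu) //.
  by rewrite !inE !negb_or xr xu xk.
- by move=> wP; rewrite step_snow (negbTE wu') (negbTE wP) andbF fin_w.
- by rewrite step_snow eqxx.
- rewrite /kept_snow /load nodes_tree big_cons step_snow eqxx /=; case: ifP => wP //.
  by rewrite (negbTE wu') eqxx wP fin_w /kept_snow wP /=; move: fin_u; clear; lia.
Qed.

Lemma sweepP u w t : sweepable u w t -> sweeps u w t.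
Proof.
elim: t u w => [|r k IHk s IHs] u w Sw.
  by move=> st cap _; split=> //; split=> //; rewrite /load big_nil addn0.
have [Swt Sws] := sweepable_fcat (Sw : sweepable u w (fcat (Node r k Leaf) s)).
apply: (sweeps_fcat (t1 := Node r k Leaf)) => //; last exact: IHs.
by apply: sweeps_tree => //; apply: IHk; exact: sweepable_child Swt.
Qed.

End Sweep.

Lemma sum_nat_ge_term (f : nat -> nat) m n j : m <= j < n -> f j <= \sum_(m <= i < n) f i.
Proof.
case/andP=> mj jn; rewrite (big_cat_nat mj (ltnW jn)) (big_ltn jn) /=.
by rewrite addnCA leq_addr.
Qed.

Lemma sum_nat_split3 (f g h : nat -> nat) n :
  (forall j, j < n -> f j <= g j <= h j) ->
  \sum_(0 <= j < n) (h j - f j) = \sum_(0 <= j < n) (h j - g j) + \sum_(0 <= j < n) (g j - f j).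
Proof. by move=> fgh; rewrite -big_split /=; apply: eq_big_nat => j /andP[_ /fgh]; lia. Qed.

Lemma sum_nat_eq_indicator (a r n : nat) :
  r < n -> \sum_(0 <= j < n) (if j == r then a else 0) = a.
Proof.
move=> rn; rewrite (big_cat_nat (leq0n r) (ltnW rn)) (big_ltn rn) /= eqxx.
rewrite big_nat_cond big1 ?add0n => [|i /andP[/andP[_ ir] _]]; last by rewrite ltn_eqF.
rewrite big_nat_cond big1 ?addn0 // => i /andP[/andP[ri _] _].
by rewrite gtn_eqF.
Qed.

Lemma sum_nat_ltn_indicator (r n : nat) : r <= n -> \sum_(0 <= j < n) (j < r : nat) = r.
Proof.
move=> rn; rewrite (big_cat_nat (leq0n r) rn) /=.
rewrite (@eq_big_nat _ _ _ 0 r _ (fun _ => 1)); last by move=> i /andP[_ ->].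
rewrite sum_nat_const_nat muln1 subn0 big_nat_cond big1 ?addn0 //.
by move=> i /andP[/andP[ri _] _]; rewrite ltnNge ri.
Qed.

Lemma sum_nat_leq_indicator a b f : \sum_(a <= i < b) (f <= i : nat) <= b - f.
Proof.
elim: b => [|b IH]; first by rewrite big_geq.
case: (leqP a b) => ab; last by rewrite big_geq.
by rewrite big_nat_recr //=; move: IH; case: (leqP f b); lia.
Qed.

Section Schedule.
Variables (H D : nat) (len : nat -> nat).
Hypothesis D_gt0 : 0 < D.
Hypothesis H_gt0 : 0 < H.
Hypothesis len_gt0 : forall j, j < H -> 0 < len j.

(* A profile [F] stands for the cleared cells of the comb: the first [F j] cells of each row
   [j < H], whose length is [len j]; row [0] starts with the root. *)

(* the head of row [j]: it leaves a multiple of [D] cells *)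
Definition row_head j := (len j - 1) %% D + 1.
Definition profile0 j : nat := j == 0.
Definition heads_left (F : nat -> nat) := \sum_(0 <= j < H) (row_head j - F j).
Definition snow_left (F : nat -> nat) := \sum_(0 <= j < H) (len j - F j).
Definition vdist_left (F : nat -> nat) := \sum_(0 <= j < H) \sum_(F j <= i < len j) (1 + i + j).
Definition potential F := 2 * D * snow_left F + vdist_left F.
Definition raise (F : nat -> nat) J (g : nat -> nat) j := if j < J then maxn (F j) (g j) else F j.

(* [F] clears, in reading order, the heads of the rows before [r] and part of that of row [r] *)
Definition head_prefix (F : nat -> nat) r :=
  [/\ r < H, (forall j, j < r -> F j = row_head j),
      (forall j, r < j -> j < H -> F j = profile0 j), profile0 r <= F r & F r <= row_head r].

(* the heads left fill whole trips, except before the first trip *)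
Definition head_phase F :=
  exists2 r, head_prefix F r & (forall j, j < H -> F j = profile0 j) \/ D %| heads_left F.

Definition tail_phase (F : nat -> nat) :=
  forall j, j < H -> [/\ row_head j <= F j, F j <= len j & D %| len j - F j].

Definition good F := head_phase F \/ tail_phase F.

Definition valid_profile (F : nat -> nat) := (forall j, j < H -> F j <= len j) /\ 0 < F 0.

(* A trip from the root through the cells [i < g j] of the rows [j < J]: it takes
   [2 * (\sum_(j < J) g j - 1)] moves and leaves the profile [raise F J g]. *)
Record batch (F : nat -> nat) (J : nat) (g : nat -> nat) : Prop := Batch {
  batch_rows : 0 < J <= H;
  batch_reach : forall j, j < J -> 0 < g j <= len j;
  batch_load : \sum_(0 <= j < J) (g j - F j) <= D;
  batch_good : good (raise F J g);
  batch_progress : snow_left (raise F J g) < snow_left F;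
  batch_cost : D * (\sum_(0 <= j < J) g j - 1) + potential (raise F J g) <= potential F }.

Lemma row_head_gt0 j : 0 < row_head j.
Proof. by rewrite /row_head addn1. Qed.

Lemma row_head_leD j : row_head j <= D.
Proof. by rewrite /row_head addn1 ltn_pmod. Qed.

Lemma row_head_len j : j < H -> row_head j <= len j.
Proof. by move=> /len_gt0; rewrite /row_head; have := leq_mod (len j - 1) D; lia. Qed.

Lemma dvdn_len_row_head j : j < H -> D %| len j - row_head j.
Proof.
move=> /len_gt0 lj; rewrite /row_head.
have -> : len j - ((len j - 1) %% D + 1) = (len j - 1) %/ D * D.
  have := divn_eq (len j - 1) D.
  by move: ((len j - 1) %/ D * D) ((len j - 1) %% D) => a b; lia.
exact: dvdn_mull.
Qed.

Lemma vdist_left_split (F G : nat -> nat) :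
  (forall j, j < H -> F j <= G j <= len j) ->
  vdist_left F = vdist_left G + \sum_(0 <= j < H) \sum_(F j <= i < G j) (1 + i + j).
Proof.
move=> FG; rewrite /vdist_left -big_split /=.
by apply: eq_big_nat => j /andP[_ /FG /andP[Fj Gj]]; rewrite addnC -big_cat_nat.
Qed.

Lemma sum_cleared_lb (F G : nat -> nat) K :
  (forall j, j < H -> F j < G j -> K <= 1 + F j + j) ->
  K * \sum_(0 <= j < H) (G j - F j) <= \sum_(0 <= j < H) \sum_(F j <= i < G j) (1 + i + j).
Proof.
move=> FG; rewrite big_distrr /= big_nat_cond [X in _ <= X]big_nat_cond.
apply: leq_sum => j /andP[/andP[_ jH] _].
case: (ltnP (F j) (G j)) => [FGj|]; last by rewrite -subn_eq0 => /eqP ->; rewrite muln0.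
rewrite mulnC -sum_nat_const_nat big_nat_cond [X in _ <= X]big_nat_cond.
apply: leq_sum => i /andP[/andP[Fi _] _].
by apply: leq_trans (FG j jH FGj) _; rewrite leq_add2r leq_add2l.
Qed.

Lemma sum_raise (F g : nat -> nat) J : J <= H ->
  \sum_(0 <= j < J) (g j - F j) = \sum_(0 <= j < H) (raise F J g j - F j).
Proof.
move=> JH; rewrite (big_cat_nat (leq0n J) JH) /=.
have -> : \sum_(J <= j < H) (raise F J g j - F j) = 0.
  by rewrite big_nat_cond big1 // => j /andP[/andP[Jj _] _]; rewrite /raise ltnNge Jj subnn.
by rewrite addn0; apply: eq_big_nat => j /andP[_ jJ]; rewrite /raise jJ; lia.
Qed.

Lemma head_prefix_le F r : head_prefix F r -> forall j, j < H -> F j <= row_head j.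
Proof.
case=> _ lt_r gt_r _ Fr j jH; case: (ltngtP j r) => [/lt_r -> //|rj|-> //].
by rewrite gt_r // /profile0; case: (j == 0); rewrite ?row_head_gt0.
Qed.

Lemma head_prefix_ge F r : head_prefix F r -> forall j, j < H -> profile0 j <= F j.
Proof.
case=> _ lt_r gt_r Fr _ j jH; case: (ltngtP j r) => [/lt_r ->|rj|-> //]; last by rewrite gt_r.
by rewrite /profile0; case: (j == 0); rewrite ?row_head_gt0.
Qed.

Lemma head_prefix_valid F r : head_prefix F r -> valid_profile F.
Proof.
move=> hp; split; first by move=> j jH; apply: leq_trans (head_prefix_le hp jH) (row_head_len jH).
by apply: head_prefix_ge hp _ H_gt0.
Qed.

Definition incr_at (F : nat -> nat) r j := if j == r then (F j).+1 else F j.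

Lemma head_prefix_incr F r : head_prefix F r -> 0 < heads_left F ->
  exists2 r', r <= r' <= r.+1 & head_prefix (incr_at F r') r'.
Proof.
move=> hp; case: (hp) => rH lt_r gt_r Fr0 Frh left_gt0.
case: (ltnP (F r) (row_head r)) => Fr.
  exists r; first by rewrite leqnn leqnSn.
  split=> //; rewrite /incr_at ?eqxx //.
  - by move=> j jr; rewrite (ltn_eqF jr) lt_r.
  - by move=> j rj jH; rewrite (gtn_eqF rj) gt_r.
  - exact: leq_trans Fr0 (leqnSn _).
have {}Fr : F r = row_head r by apply/eqP; rewrite eqn_leq Frh.
case: (ltnP r.+1 H) => r1H.
  exists r.+1; first by rewrite leqnSn leqnn.
  split=> //; rewrite /incr_at ?eqxx.
  - move=> j jr; rewrite (ltn_eqF jr).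
    case: (ltngtP j r) => [/lt_r -> //|rj|-> //].
    by move: jr; rewrite ltnS leqNgt rj.
  - by move=> j rj jH; rewrite (gtn_eqF rj) gt_r // (ltn_trans (ltnSn r)).
  - by rewrite gt_r // /profile0 /= row_head_gt0.
exfalso; move: left_gt0; rewrite /heads_left big_nat_cond big1 // => j /andP[/andP[_ jH] _].
have jr : j <= r by rewrite -ltnS (leq_trans jH r1H).
case: (ltngtP j r) => [/lt_r -> | rj | ->]; rewrite ?Fr ?subnn //.
by move: jr; rewrite leqNgt rj.
Qed.

Lemma heads_left_split (F G : nat -> nat) :
  (forall j, j < H -> F j <= G j <= row_head j) ->
  heads_left F = heads_left G + \sum_(0 <= j < H) (G j - F j).
Proof. exact: sum_nat_split3. Qed.

Lemma snow_left_split (F G : nat -> nat) :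
  (forall j, j < H -> F j <= G j <= len j) ->
  snow_left F = snow_left G + \sum_(0 <= j < H) (G j - F j).
Proof. exact: sum_nat_split3. Qed.

Record head_advance (F : nat -> nat) r (F' : nat -> nat) r' k : Prop := HeadAdvance {
  advance_prefix : head_prefix F' r';
  advance_row : r <= r';
  advance_ge : forall j, j < H -> F j <= F' j;
  advance_fixed : forall j, j < r \/ H <= j -> F' j = F j;
  advance_amount : \sum_(0 <= j < H) (F' j - F j) = k;
  advance_last : 0 < k -> 0 < F' r' }.

Lemma head_prefix_advance k F r : head_prefix F r -> k <= heads_left F ->
  exists F', exists r', head_advance F r F' r' k.
Proof.
elim: k => [|k IH] hp hk.
  exists F, r; split=> //; rewrite big_nat_cond big1 // => j _; exact: subnn.
have [F1 [r1 [hp1 rr1 FF1 fix1 amount1 _]]] := IH hp (ltnW hk).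
have left1 : heads_left F = heads_left F1 + k.
  by rewrite (heads_left_split (G := F1)) ?amount1 // => j jH; rewrite FF1 ?(head_prefix_le hp1).
have [r2 /andP[r12 r21] hp2] := head_prefix_incr hp1 (ltac:(lia) : 0 < heads_left F1).
have r2H : r2 < H by case: hp2.
exists (incr_at F1 r2), r2; split=> //.
- exact: leq_trans rr1 r12.
- by move=> j jH; apply: leq_trans (FF1 j jH) _; rewrite /incr_at; case: (j == r2).
- move=> j jr; rewrite /incr_at (_ : (j == r2) = false) ?fix1 //.
  by apply/negbTE/eqP => E; move: jr rr1 r12 r2H; rewrite E; clear; lia.
- rewrite -addn1 -amount1 (big_cat_nat (leq0n r2) (ltnW r2H)) /= (big_ltn r2H).
  rewrite [X in _ = X + _](big_cat_nat (leq0n r2) (ltnW r2H)) /= (big_ltn r2H).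
  rewrite (@eq_big_nat _ _ _ 0 r2 (fun j => incr_at F1 r2 j - F j) (fun j => F1 j - F j));
    last first.
    by move=> j /andP[_ jr]; rewrite /incr_at ltn_eqF.
  rewrite (@eq_big_nat _ _ _ r2.+1 H (fun j => incr_at F1 r2 j - F j) (fun j => F1 j - F j));
    last first.
    by move=> j /andP[rj _]; rewrite /incr_at gtn_eqF.
  by rewrite /incr_at eqxx; have := FF1 r2 r2H; lia.
- by rewrite /incr_at eqxx.
Qed.

Lemma exists_unfinished_row F : 0 < snow_left F -> exists2 j0, j0 < H & F j0 < len j0.
Proof.
move=> left_gt0.
case: (boolP (has (fun j => F j < len j) (index_iota 0 H))) => [/hasP[j]|/hasPn none].
  by rewrite mem_index_iota => /andP[_ jH] Fj; exists j.
move: left_gt0; rewrite /snow_left big_seq big1 // => j /none.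
by rewrite -leqNgt -subn_eq0 => /eqP.
Qed.

Section TailBatch.
Variables (F : nat -> nat) (j0 : nat).
Hypothesis tp : tail_phase F.
Hypothesis j0H : j0 < H.
Hypothesis Fj0 : F j0 < len j0.

Definition tail_reach j := if j < j0 then 1 else F j0 + D.
Definition tail_step j := if j == j0 then F j0 + D else F j.

Lemma raise_tail_reach : raise F j0.+1 tail_reach = tail_step.
Proof.
have F_gt0 j : j < H -> 0 < F j.
  by move=> jH; case: (tp jH) => hF _ _; apply: leq_trans (row_head_gt0 j) hF.
apply: functional_extensionality => j; rewrite /raise /tail_reach /tail_step.
case: (ltngtP j j0) => [jj0|j0j|->].
- by rewrite ltnS (ltnW jj0); apply/maxn_idPl/F_gt0/(ltn_trans jj0).
- by rewrite ltnS leqNgt j0j.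
- by rewrite ltnSn; apply/maxn_idPr/leq_addr.
Qed.

Lemma tail_step_le_len : F j0 + D <= len j0.
Proof.
have [_ _ dvd] := tp j0H.
by rewrite -leq_subRL ?(ltnW Fj0) // dvdn_leq // subn_gt0.
Qed.

Lemma tail_step_range j : j < H -> F j <= tail_step j <= len j.
Proof.
move=> jH; rewrite /tail_step; case: eqP => [->|_]; first by rewrite leq_addr tail_step_le_len.
by case: (tp jH) => _ -> _; rewrite leqnn.
Qed.

Lemma sum_tail_step : \sum_(0 <= j < H) (tail_step j - F j) = D.
Proof.
rewrite -(sum_nat_eq_indicator D j0H); apply: eq_big_nat => j _.
by rewrite /tail_step; case: eqP => [->|_]; rewrite ?addKn ?subnn.
Qed.

Lemma sum_tail_reach : \sum_(0 <= j < j0.+1) tail_reach j = j0 + (F j0 + D).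
Proof.
rewrite big_nat_recr //= /tail_reach ltnn (@eq_big_nat _ _ _ 0 j0 _ (fun _ => 1)).
  by rewrite sum_nat_const_nat subn0 muln1.
by move=> i /andP[_ ->].
Qed.

End TailBatch.

Lemma tail_batch F : tail_phase F -> 0 < snow_left F -> exists J g, batch F J g.
Proof.
move=> tp left_gt0; have [j0 j0H Fj0] := exists_unfinished_row left_gt0.
have FF' := tail_step_range tp j0H Fj0.
have snowE : snow_left F = snow_left (tail_step F j0) + D.
  by rewrite (snow_left_split FF') (sum_tail_step _ j0H).
have vdistE : vdist_left (tail_step F j0) + (1 + F j0 + j0) * D <= vdist_left F.
  rewrite (vdist_left_split FF') -(sum_tail_step F j0H) leq_add2l.
  by apply: sum_cleared_lb => j jH; rewrite /tail_step; case: eqP => [->|_]; rewrite ?ltnn.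
exists j0.+1, (tail_reach F j0); split; rewrite ?(raise_tail_reach tp j0H) //.
- move=> j; rewrite ltnS leq_eqVlt => /orP[/eqP ->|jj0]; rewrite /tail_reach ?ltnn ?jj0.
    by rewrite addn_gt0 D_gt0 orbT (tail_step_le_len tp j0H Fj0).
  by rewrite len_gt0 // (ltn_trans jj0).
- by rewrite (sum_raise _ _ j0H) (raise_tail_reach tp j0H) (sum_tail_step _ j0H).
- have [headj0 _ dvd_j0] := tp j0 j0H; have lenj0 := tail_step_le_len tp j0H Fj0.
  right=> j jH; rewrite /tail_step; case: eqP => [->|_]; last exact: tp.
  by rewrite subnDA; split; [exact: leq_trans headj0 (leq_addr _ _) | | exact: dvdn_sub].
- by rewrite snowE -addn1 leq_add2l.
- rewrite /potential sum_tail_reach snowE; move: vdistE.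
  move: (vdist_left F) (vdist_left (tail_step F j0)) (snow_left (tail_step F j0)) => a b c.
  by clear -D_gt0; nia.
Qed.

Lemma head_phase_done F : head_phase F -> heads_left F = 0 -> tail_phase F.
Proof.
case=> r hp _ left0 j jH.
have := sum_nat_ge_term (fun j => row_head j - F j) (ltac:(by rewrite leq0n jH) : 0 <= j < H).
rewrite -/(heads_left F) left0 leqn0 subn_eq0 => hF.
have -> : F j = row_head j by apply/eqP; rewrite eqn_leq hF (head_prefix_le hp).
by split; [exact: leqnn | exact: row_head_len | exact: dvdn_len_row_head].
Qed.

(* the number of heads' cells cleared by a trip when [n] are left *)
Definition chunk n := if D %| n then D else n %% D.

Lemma chunk_spec n : 0 < n -> [/\ 0 < chunk n, chunk n <= D, chunk n <= n & D %| n - chunk n].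
Proof.
rewrite /chunk; case: ifP => dvd n_gt0.
  by split=> //; [exact: dvdn_leq | exact: dvdn_sub].
split; [by rewrite lt0n; move: dvd; rewrite /dvdn => -> | exact: ltnW (ltn_pmod _ D_gt0)
       | exact: leq_mod |].
by rewrite {1}(divn_eq n D) addnK dvdn_mull.
Qed.

Lemma head_prefix_profile0 F r : head_prefix F r ->
  (forall j, j < H -> F j = profile0 j) -> r + F r <= 1.
Proof.
move=> [rH lt_r _ _ _] F0; case: r rH lt_r => [|[|r]] rH lt_r; rewrite ?F0 //.
have := lt_r 1 (ltn0Sn _); rewrite F0 ?(leq_ltn_trans _ rH) //.
by move=> h; have := row_head_gt0 1; rewrite -h.
Qed.

Section HeadBatch.
Variables (F : nat -> nat) (r : nat) (F' : nat -> nat) (r' k : nat).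
Hypothesis hp : head_prefix F r.
Hypothesis adv : head_advance F r F' r' k.

Definition head_reach j := if j < r then 1 else F' j.

Lemma raise_head_reach : raise F r'.+1 head_reach = F'.
Proof.
have [hp' rr' FF' fixed _ _] := adv.
have [rH lt_r gt_r _ _] := hp; have [r'H _ gt_r' _ _] := hp'.
apply: functional_extensionality => j; rewrite /raise /head_reach.
case: (ltnP j r'.+1) => jr'.
  case: (ltnP j r) => jr; last exact/maxn_idPr/FF'/(leq_ltn_trans _ r'H).
  rewrite fixed; last by left.
  by rewrite lt_r //; apply/maxn_idPl; rewrite row_head_gt0.
case: (ltnP j H) => jH; last by rewrite fixed //; right.
by rewrite gt_r ?gt_r' //; apply: leq_ltn_trans rr' jr'.
Qed.

Lemma sum_head_reach_cleared : \sum_(0 <= j < r'.+1) (head_reach j - F j) = k.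
Proof.
have [[r'H _ _ _ _] _ _ _ amount _] := adv.
by rewrite (sum_raise _ _ r'H) raise_head_reach amount.
Qed.

Lemma sum_head_reach : \sum_(0 <= j < r'.+1) head_reach j <= r + F r + k.
Proof.
have [[r'H _ _ _ _] rr' FF' _ _ _] := adv; have [rH _ gt_r _ _] := hp.
have rr'1 : r < r'.+1 by rewrite ltnS.
have -> : r + F r + k = \sum_(0 <= j < r'.+1)
    ((j < r : nat) + (if j == r then F r else 0) + (head_reach j - F j)).
  rewrite !big_split /= (sum_nat_ltn_indicator (ltnW rr'1)) (sum_nat_eq_indicator _ rr'1).
  by rewrite sum_head_reach_cleared.
rewrite big_nat_cond [X in _ <= X]big_nat_cond.
apply: leq_sum => j /andP[/andP[_ jr'] _]; rewrite /head_reach.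
case: (ltngtP j r) => [jr|rj|->]; [by rewrite leq_addr | | by rewrite add0n subnKC ?FF'].
rewrite gt_r ?(leq_trans jr' r'H) // /profile0 gtn_eqF ?(leq_ltn_trans (leq0n r) rj) //.
by rewrite subn0.
Qed.

Lemma head_advance_range j : j < H -> F j <= F' j <= len j.
Proof.
have [hp' _ FF' _ _ _] := adv.
by move=> jH; rewrite FF' // (leq_trans (head_prefix_le hp' jH) (row_head_len jH)).
Qed.

Lemma vdist_left_head_advance : vdist_left F' + (1 + r) * k <= vdist_left F.
Proof.
have [_ _ _ fixed amount _] := adv.
rewrite (vdist_left_split head_advance_range) -amount leq_add2l.
apply: sum_cleared_lb => j jH FF'j.
case: (ltnP j r) => [jr|rj]; first by move: FF'j; rewrite fixed ?ltnn //; left.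
by rewrite -addnA leq_add2l (leq_trans rj) ?leq_addl.
Qed.

(* Either this is the first trip (only the root is cleared), or it clears [D] cells. *)
Lemma head_reach_cost : (forall j, j < H -> F j = profile0 j) \/ k = D ->
  D * (\sum_(0 <= j < r'.+1) head_reach j - 1) <= 2 * D * k + (1 + r) * k.
Proof.
move=> init; move: sum_head_reach; case: init => [F0|->] reach.
  move: reach (head_prefix_profile0 hp F0).
  by move: (\sum_(0 <= j < r'.+1) head_reach j) (F r) => X Fr; clear; nia.
have [_ _ _ _ Frh] := hp; move: reach (leq_trans Frh (row_head_leD r)).
by move: (\sum_(0 <= j < r'.+1) head_reach j) (F r) => X Fr; clear; nia.
Qed.

End HeadBatch.

Lemma head_batch F : head_phase F -> 0 < heads_left F -> exists J g, batch F J g.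
Proof.
case=> r hp init left_gt0.
have [s_gt0 sD s_left dvd_s] := chunk_spec left_gt0.
set s := chunk (heads_left F) in s_gt0 sD s_left dvd_s.
have [F' [r' adv]] := head_prefix_advance hp s_left.
have [hp' _ FF' _ amount last_gt0] := adv; have [r'H lt_r' _ _ Fr'] := hp'.
have snowE : snow_left F = snow_left F' + s.
  by rewrite (snow_left_split (head_advance_range adv)) amount.
have leftE : heads_left F = heads_left F' + s.
  by rewrite (heads_left_split (G := F')) ?amount // => j jH; rewrite FF' // (head_prefix_le hp').
have cost : D * (\sum_(0 <= j < r'.+1) head_reach r F' j - 1) <= 2 * D * s + (1 + r) * s.
  by apply: head_reach_cost hp adv _; case: init => [|dvd]; [left | right; rewrite /s /chunk dvd].
exists r'.+1, (head_reach r F'); split; rewrite ?(raise_head_reach hp adv) //.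
- move=> j jr'; have jH : j < H := leq_trans jr' r'H.
  rewrite /head_reach; case: ifP => jr; first by rewrite /= len_gt0.
  case: (ltngtP j r') jr' => [/lt_r' -> _|r'j|-> _]; first by rewrite row_head_gt0 row_head_len.
    by rewrite ltnS leqNgt r'j.
  by rewrite last_gt0 // (leq_trans Fr' (row_head_len r'H)).
- by rewrite (sum_head_reach_cleared hp adv).
- by apply: or_introl; exists r' => //; right; move: dvd_s; rewrite leftE addnK.
- by rewrite snowE -[X in X < _]addn0 ltn_add2l.
- rewrite /potential snowE; move: cost (vdist_left_head_advance adv).
  move: (D * _) (vdist_left F) (vdist_left F') (snow_left F') => a b c d; clear; nia.
Qed.

Lemma batch_exists F : good F -> 0 < snow_left F -> exists J g, batch F J g.
Proof.
case=> [hph|tph] left_gt0; last exact: tail_batch.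
have [left0|] := posnP (heads_left F); last exact: head_batch.
exact: tail_batch (head_phase_done hph left0) left_gt0.
Qed.

Lemma good_valid F : good F -> valid_profile F.
Proof.
case=> [[r hp _]|tph]; first exact: head_prefix_valid hp.
split; first by move=> j /tph [].
by have [h _ _] := tph 0 H_gt0; apply: leq_trans (row_head_gt0 0) h.
Qed.

Lemma snow_left0_full F : valid_profile F -> snow_left F = 0 -> forall j, j < H -> F j = len j.
Proof.
move=> [Flen _] left0 j jH; apply/eqP; rewrite eqn_leq Flen //= -subn_eq0 -leqn0 -left0.
exact: (sum_nat_ge_term (fun j => len j - F j) (ltac:(by rewrite leq0n jH) : 0 <= j < H)).
Qed.

Lemma good_profile0 : good profile0.
Proof. by left; exists 0; [split; rewrite ?row_head_gt0 | left]. Qed.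

End Schedule.

Section CombGeometry.
Variables (x0 y0 sx sy : int).
Hypothesis sx_unit : sx = 1%R \/ sx = (-1)%R.
Hypothesis sy_unit : sy = 1%R \/ sy = (-1)%R.

(* [cell j i]: the pixel in row [j] (counted from the root along the handle)
   and column [i] (counted from the handle along the tooth) *)
Definition cell (j i : nat) : pixel := (x0 + sx * i%:Z, y0 + sy * j%:Z)%R.
Definition col_of (x : pixel) : nat := absz (x.1 - x0)%R.
Definition row_of (x : pixel) : nat := absz (x.2 - y0)%R.

Lemma col_of_cell j i : col_of (cell j i) = i.
Proof. by rewrite /col_of /cell /=; case: sx_unit => ->; lia. Qed.

Lemma row_of_cell j i : row_of (cell j i) = j.
Proof. by rewrite /row_of /cell /=; case: sy_unit => ->; lia. Qed.

Lemma cell_inj j i j' i' : cell j i = cell j' i' -> j = j' /\ i = i'.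
Proof.
move=> E; split; first by rewrite -(row_of_cell j i) E row_of_cell.
by rewrite -(col_of_cell j i) E col_of_cell.
Qed.

Lemma adj_cell_col j i : adj (cell j i) (cell j i.+1).
Proof. by rewrite /adj /cell /=; case: sx_unit => ->; apply/eqP; lia. Qed.

Lemma adj_cell_row j : adj (cell j 0) (cell j.+1 0).
Proof. by rewrite /adj /cell /=; case: sy_unit => ->; apply/eqP; lia. Qed.

Definition cells (F G : nat -> nat) (rows : seq nat) : seq pixel :=
  flatten [seq [seq cell j i | i <- index_iota (F j) (G j)] | j <- rows].

Lemma cells_cons F G j rows :
  cells F G (j :: rows) = [seq cell j i | i <- index_iota (F j) (G j)] ++ cells F G rows.
Proof. by []. Qed.

Lemma mem_cells F G rows x :
  x \in cells F G rows <-> exists j i, [/\ j \in rows, F j <= i < G j & x = cell j i].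
Proof.
split=> [/flatten_mapP[j jr /mapP[i]]|[j [i [jr ij ->]]]].
  by rewrite mem_index_iota => ij ->; exists j, i.
by apply/flatten_mapP; exists j => //; apply/mapP; exists i; rewrite ?mem_index_iota.
Qed.

Lemma uniq_cells F G rows : uniq rows -> uniq (cells F G rows).
Proof.
elim: rows => //= j rows IH /andP[jr /IH Ur]; rewrite cat_uniq Ur andbT.
rewrite map_inj_uniq ?iota_uniq; last by move=> i i' /cell_inj[].
apply/hasPn => x /mem_cells[j' [i' [j'r _ ->]]]; apply/negP => /mapP[i _ /cell_inj[jj' _]].
by move: j'r; rewrite jj' (negbTE jr).
Qed.

Lemma big_cells (f : pixel -> nat) F G rows :
  \sum_(x <- cells F G rows) f x = \sum_(j <- rows) \sum_(F j <= i < G j) f (cell j i).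
Proof. by rewrite big_flatten big_map; apply: eq_bigr => j _; rewrite big_map. Qed.

Lemma size_cells F G rows : size (cells F G rows) = \sum_(j <- rows) (G j - F j).
Proof.
rewrite -sum1_size big_cells; apply: eq_bigr => j _.
by rewrite sum_nat_const_nat muln1.
Qed.

Fixpoint tooth (j i k : nat) : forest :=
  if k is k'.+1 then Node (cell j i) (tooth j i.+1 k') Leaf else Leaf.

Fixpoint handle_forest (g : nat -> nat) (j m : nat) : forest :=
  if m is m'.+1 then Node (cell j 0) (fcat (tooth j 1 (g j - 1)) (handle_forest g j.+1 m')) Leaf
  else Leaf.

(* the forest hanging from the root [cell 0 0] made of the cells [cell j i],
   [j < J], [i < g j]: the handle up to row [J - 1] and each tooth up to [g j] *)
Definition batch_forest (J : nat) (g : nat -> nat) : forest :=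
  fcat (tooth 0 1 (g 0 - 1)) (handle_forest g 1 (J - 1)).

Lemma nodes_tooth j i k : nodes (tooth j i k) = [seq cell j i' | i' <- iota i k].
Proof. by elim: k i => //= k IH i; rewrite IH cats0. Qed.

Lemma hangs_tooth j i k : hangs_from (cell j i) (tooth j i.+1 k).
Proof. by elim: k i => //= k IH i; rewrite adj_cell_col IH. Qed.

Lemma nodes_handle_forest g j m : 0 < j -> (forall k, j <= k < j + m -> 0 < g k) ->
  nodes (handle_forest g j m) = cells profile0 g (iota j m).
Proof.
elim: m j => //= m IH j j_gt0 g_gt0; rewrite nodes_fcat nodes_tooth cats0 IH //; last first.
  by move=> k /andP[jk km]; apply: g_gt0; rewrite ltnW //= addnS.
have gj : 0 < g j by apply: g_gt0; rewrite leqnn addnS ltnS leq_addr.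
rewrite cells_cons /profile0 gtn_eqF // /index_iota subn0.
by case: (g j) gj => //= n _; rewrite subn1.
Qed.

Lemma hangs_handle_forest g j m : hangs_from (cell j 0) (handle_forest g j.+1 m).
Proof. by elim: m j => //= m IH j; rewrite adj_cell_row hangs_from_fcat hangs_tooth IH. Qed.

Lemma nodes_batch_forest J g : 0 < J -> (forall j, j < J -> 0 < g j) ->
  nodes (batch_forest J g) = cells profile0 g (iota 0 J).
Proof.
move=> J_gt0 g_gt0; rewrite /batch_forest nodes_fcat nodes_tooth nodes_handle_forest //.
  by case: J J_gt0 g_gt0 => //= J _ _; rewrite cells_cons /index_iota /= subSS subn0.
by move=> k /andP[_ kJ]; apply: g_gt0; move: kJ J_gt0; clear; lia.
Qed.

Lemma hangs_batch_forest J g : hangs_from (cell 0 0) (batch_forest J g).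
Proof. by rewrite /batch_forest hangs_from_fcat hangs_tooth hangs_handle_forest. Qed.

End CombGeometry.

Lemma cost_bound_rat (R : realFieldType) (n mu W D : nat) : 0 < D ->
  D * n <= 2 * (2 * D * mu + W) -> (n%:R <= 4 * mu%:R + 2 * (W%:R / D%:R) :> R)%R.
Proof.
move=> D_gt0 cost; have D_pos : (0 < D%:R :> R)%R by rewrite ltr0n.
have -> : (4 * mu%:R + 2 * (W%:R / D%:R) = (4 * mu%:R * D%:R + 2 * W%:R) / D%:R :> R)%R.
  by field; rewrite lt0r_neq0.
rewrite ler_pdivlMr //; move: cost; rewrite -(ler_nat R) !natrM !natrD !natrM.
by move: (n%:R : R)%R (mu%:R : R)%R (W%:R : R)%R (D%:R : R)%R D_pos => a b c d d_pos; nra.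
Qed.

Section ClearComb.
Variables (P : seq pixel) (D : nat) (C : pred pixel) (s0 : pixel -> nat).
Variables (x0 y0 sx sy : int) (H : nat) (len : nat -> nat) (out : pixel).
Hypothesis sx_unit : sx = 1%R \/ sx = (-1)%R.
Hypothesis sy_unit : sy = 1%R \/ sy = (-1)%R.
Hypothesis D_gt0 : 0 < D.
Hypothesis H_gt0 : 0 < H.
Hypothesis len_gt0 : forall j, j < H -> 0 < len j.

Local Notation cell := (cell x0 y0 sx sy).
Local Notation cells := (cells x0 y0 sx sy).
Local Notation root := (cell 0 0).

Hypothesis C_cells : forall x, C x <-> exists j i, [/\ j < H, i < len j & x = cell j i].
Hypothesis C_sub_P : forall q, C q -> q \in P.
Hypothesis s0_comb : forall q, C q -> q != root -> s0 q = 1.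
Hypothesis s0_root : s0 root = 0.
Hypothesis s0_capacity : within_capacity P D s0.
Hypothesis out_nbrs : out \in nbrs root.
Hypothesis out_notin : out \notin P.

Definition cleared (F : nat -> nat) (x : pixel) : bool :=
  [&& x == cell (row_of y0 x) (col_of x0 x), row_of y0 x < H & col_of x0 x < F (row_of y0 x)].

Definition snow (F : nat -> nat) (x : pixel) : nat := if cleared F x then 0 else s0 x.

Lemma cleared_cell F j i : cleared F (cell j i) = (j < H) && (i < F j).
Proof. by rewrite /cleared row_of_cell // col_of_cell // eqxx. Qed.

Lemma C_cell j i : j < H -> i < len j -> C (cell j i).
Proof. by move=> jH il; apply/C_cells; exists j, i. Qed.

Lemma cell_eq_root j i : (cell j i == root) = (j == 0) && (i == 0).
Proof.
apply/eqP/andP => [/cell_inj[] // -> -> //| [/eqP -> /eqP ->] //].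
Qed.

Lemma snow_cell F j i : j < H -> i < len j -> cell j i != root -> snow F (cell j i) = (F j <= i).
Proof.
move=> jH il nroot; rewrite /snow cleared_cell jH /=.
by case: (ltnP i (F j)) => //= _; rewrite s0_comb ?C_cell.
Qed.

Lemma snow_root F : valid_profile H len F -> snow F root = 0.
Proof. by case=> _ F0; rewrite /snow cleared_cell H_gt0 F0. Qed.

Lemma snow_capacity F : within_capacity P D (snow F).
Proof. by move=> x xP; rewrite /snow; case: ifP => // _; exact: s0_capacity. Qed.

Lemma cleared_out F : valid_profile H len F -> cleared F out = false.
Proof.
case=> Flen _; apply/negP => /and3P[/eqP E jH iF].
move: out_notin; rewrite C_sub_P //; apply/C_cells.
by exists (row_of y0 out), (col_of x0 out); split; rewrite -?E // (leq_trans iF) ?Flen.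
Qed.

Lemma sum_snow_cells F J g : J <= H -> (forall j, j < J -> g j <= len j) ->
  \sum_(x <- cells profile0 g (iota 0 J)) snow F x <= \sum_(0 <= j < J) (g j - F j).
Proof.
move=> JH glen; rewrite big_cells /index_iota subn0 big_seq [X in _ <= X]big_seq.
apply: leq_sum => j; rewrite mem_iota add0n => /andP[_ jJ].
apply: leq_trans (sum_nat_leq_indicator (profile0 j) (g j) (F j)).
rewrite big_seq [X in _ <= X]big_seq.
apply: eq_leq; apply: eq_bigr => i; rewrite mem_index_iota => /andP[ji ig].
rewrite snow_cell ?(leq_trans jJ JH) ?(leq_trans ig) ?glen // cell_eq_root.
by move: ji; rewrite /profile0; case: (j == 0) => //=; rewrite lt0n.
Qed.

Lemma profile0_cell_neq_root j i : profile0 j <= i -> cell j i != root.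
Proof. by rewrite cell_eq_root /profile0; case: (j == 0); rewrite // lt0n => /negPf ->. Qed.

Local Notation batch_forest := (batch_forest x0 y0 sx sy).

Section Batch.
Variables (J : nat) (g : nat -> nat).
Hypothesis J_range : 0 < J <= H.
Hypothesis g_range : forall j, j < J -> 0 < g j <= len j.

Lemma nodes_batch : nodes (batch_forest J g) = cells profile0 g (iota 0 J).
Proof.
case/andP: J_range => J_gt0 _; apply: nodes_batch_forest => // j /g_range /andP[]//.
Qed.

Lemma mem_batch x : x \in nodes (batch_forest J g) <->
  exists j i, [/\ j < J, profile0 j <= i < g j & x = cell j i].
Proof.
rewrite nodes_batch mem_cells.
by split=> [] [j [i [jJ ij ->]]]; exists j, i; split=> //; move: jJ; rewrite mem_iota.
Qed.

Lemma batch_nodes_comb x : x \in nodes (batch_forest J g) -> C x /\ x != root.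
Proof.
case/mem_batch=> j [i [jJ /andP[ji ig] ->]]; split; last exact: profile0_cell_neq_root.
case/andP: J_range => _ JH; have /andP[_ glen] := g_range jJ.
by apply: C_cell; [exact: leq_trans jJ JH | exact: leq_trans ig glen].
Qed.

Lemma batch_sweepable : sweepable P C root out (batch_forest J g).
Proof.
have C_root : C root by apply: C_cell => //; apply: len_gt0.
split=> //.
- by rewrite nodes_batch uniq_cells ?iota_uniq.
- by apply/negP => /batch_nodes_comb[_]; rewrite eqxx.
- by apply: contra out_notin => /batch_nodes_comb[/C_sub_P].
- exact: hangs_batch_forest.
- by move=> x /batch_nodes_comb[Cx _]; split; last exact: C_sub_P.
- exact: C_sub_P.
- by right.
Qed.

Lemma raise_valid F : valid_profile H len F -> valid_profile H len (raise F J g).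
Proof.
case=> Flen F0; split=> [j jH|]; rewrite /raise; last first.
  by case: ifP => _ //; apply: leq_trans F0 (leq_maxl _ _).
case: ifP => jJ; last exact: Flen.
by rewrite geq_max Flen //; case/andP: (g_range jJ).
Qed.

Lemma cleared_raise F x : x \notin root :: nodes (batch_forest J g) ->
  cleared (raise F J g) x = cleared F x.
Proof.
rewrite inE negb_or => /andP[x_root x_nodes].
apply/and3P/and3P => [] [/eqP E rH cF]; split=> //; try exact/eqP; last first.
  by apply: leq_trans cF _; rewrite /raise; case: ifP => // _; exact: leq_maxl.
move: cF; rewrite /raise; case: ifP => // rJ; rewrite leq_max => /orP[//|cg].
case: (leqP (profile0 (row_of y0 x)) (col_of x0 x)) => [p0c|].
  case/negP: x_nodes; apply/mem_batch.
  by exists (row_of y0 x), (col_of x0 x); split=> //; apply/andP.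
rewrite /profile0; case: eqP => // r0; rewrite ltnS leqn0 => /eqP c0.
by move: x_root; rewrite E r0 c0 eqxx.
Qed.

Lemma load_batch F : valid_profile H len F -> \sum_(0 <= j < J) (g j - F j) <= D ->
  load P root out (batch_forest J g) (snow F) <= D.
Proof.
move=> vF cleared_le; rewrite /load snow_root // /kept_snow (negbTE out_notin) nodes_batch.
case/andP: J_range => _ JH; apply: leq_trans cleared_le.
by apply: sum_snow_cells => // j /g_range /andP[].
Qed.

Lemma swept_batch F fin : valid_profile H len F ->
  swept P D root out (batch_forest J g) (snow F) fin -> fin.2 =1 snow (raise F J g).
Proof.
move=> vF S x; have vF' := raise_valid vF.
case: (boolP (x \in nodes (batch_forest J g))) => [x_nodes|x_nodes].
  rewrite (swept_nodes S x_nodes) /snow.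
  case/mem_batch: x_nodes => j [i [jJ /andP[_ ig] ->]].
  case/andP: J_range => _ JH; rewrite cleared_cell (leq_trans jJ JH) /raise jJ.
  by rewrite leq_max ig orbT.
have [-> | x_root] := eqVneq x root.
  by have := swept_base S; rewrite snow_root // snow_root // leqn0 => /eqP.
have [-> | x_out] := eqVneq x out.
  by rewrite (swept_lost S out_notin) /snow !cleared_out.
have x_fresh : x \notin root :: nodes (batch_forest J g) by rewrite inE negb_or x_root.
rewrite (swept_other S) ?inE ?negb_or ?x_root ?x_out //.
by rewrite /snow cleared_raise.
Qed.

Lemma size_batch_nodes : size (nodes (batch_forest J g)) = \sum_(0 <= j < J) g j - 1.
Proof.
case/andP: J_range => J_gt0 _; have /andP[g0 _] := g_range J_gt0.
rewrite nodes_batch size_cells.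
have -> : iota 0 J = index_iota 0 J by rewrite /index_iota subn0.
rewrite !(big_ltn J_gt0) /=.
rewrite (@eq_big_nat _ _ _ 1 J (fun j => g j - profile0 j) g).
  by move: g0; rewrite /profile0 /=; clear; lia.
by move=> j /andP[j_gt0 _]; rewrite /profile0 gtn_eqF ?subn0.
Qed.

Lemma batch_run F : valid_profile H len F -> \sum_(0 <= j < J) (g j - F j) <= D ->
  let ms := sweep root out (batch_forest J g) in
  [/\ valid_run P D C (root, snow F) ms, run P (root, snow F) ms = (root, snow (raise F J g))
    & size ms = 2 * (\sum_(0 <= j < J) g j - 1)].
Proof.
move=> vF cleared_le ms.
have [V S] := sweepP batch_sweepable (snow_capacity F) (load_batch vF cleared_le).
split=> //; last by rewrite /ms size_sweep size_batch_nodes.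
rewrite [LHS]surjective_pairing (swept_pos S); congr pair.
exact/functional_extensionality/(swept_batch vF S).
Qed.

End Batch.

Lemma snow_full F : valid_profile H len F -> snow_left H len F = 0 -> forall q, C q -> snow F q = 0.
Proof.
move=> vF left0 q /C_cells[j [i [jH il ->]]].
by rewrite /snow cleared_cell jH (snow_left0_full vF left0 jH) il.
Qed.

Lemma clear_from m F : snow_left H len F <= m -> good H D len F ->
  exists ms, [/\ valid_run P D C (root, snow F) ms, (run P (root, snow F) ms).1 = root,
                 (forall q, C q -> (run P (root, snow F) ms).2 q = 0)
               & D * size ms <= 2 * potential H D len F].
Proof.
elim: m F => [|m IH] F left_m gF; have vF := good_valid D_gt0 H_gt0 len_gt0 gF;
  (have [left0|left_gt0] := posnP (snow_left H len F);
   first by exists [::]; split=> //; [exact: snow_full | rewrite muln0]).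
  by move: left_gt0; rewrite lt0n -leqn0 left_m.
have [J [g b]] := batch_exists D_gt0 H_gt0 len_gt0 gF left_gt0.
have [V1 R1 size1] := batch_run (batch_rows b) (batch_reach b) vF (batch_load b).
have [ms2 [V2 pos2 clear2 cost2]] :=
  IH _ (leq_trans (batch_progress b) left_m : _ <= m) (batch_good b).
exists (sweep root out (batch_forest J g) ++ ms2).
rewrite run_cat R1 size_cat size1; split=> //; first by apply/valid_run_cat; rewrite R1.
move: cost2 (batch_cost b); rewrite mulnDr mulnCA.
move: (D * size ms2) (D * (\sum_(0 <= j < J) g j - 1)) (potential H D len (raise F J g)).
by move=> a c p; lia.
Qed.

Lemma snow_profile0 : snow profile0 = s0.
Proof.
apply: functional_extensionality => x; rewrite /snow /cleared.
case: ifP => // /and3P[/eqP E _]; rewrite /profile0.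
by case: eqP => [r0 | _] //; rewrite ltnS leqn0 => /eqP c0; rewrite E r0 c0.
Qed.

Lemma comb_rest_perm :
  perm_eq [seq q <- undup P | C q && (q != root)] (cells profile0 len (iota 0 H)).
Proof.
apply: uniq_perm; rewrite ?filter_uniq ?undup_uniq ?uniq_cells ?iota_uniq // => x.
rewrite mem_filter mem_undup; apply/idP/idP.
  case/andP=> /andP[/C_cells[j [i [jH il ->]]]]; rewrite cell_eq_root => n_root _.
  apply/mem_cells; exists j, i; rewrite mem_iota jH il; split=> //.
  by rewrite andbT; move: n_root; rewrite /profile0; case: (j == 0); rewrite //= lt0n.
case/mem_cells=> j [i [jH /andP[ji il] ->]]; move: jH; rewrite mem_iota add0n => jH.
by rewrite C_cell // profile0_cell_neq_root // C_sub_P ?C_cell.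
Qed.

Lemma clear_comb : (forall q, C q -> vdist P q = 1 + col_of x0 q + row_of y0 q) ->
  exists ms, [/\ valid_run P D C (root, s0) ms, (run P (root, s0) ms).1 = root,
                 (forall q, C q -> (run P (root, s0) ms).2 q = 0)
               & ((size ms)%:R <= 4 * (comb_rest_size P C root)%:R
                                  + 2 * Delta P C root D :> rat)%R].
Proof.
move=> vdist_comb.
have [ms [V pos cleared_all cost]] := clear_from (leqnn _) (good_profile0 D len H_gt0).
rewrite snow_profile0 in V pos cleared_all cost; exists ms; split=> //.
have sizeE : comb_rest_size P C root = snow_left H len profile0.
  by rewrite /comb_rest_size (perm_size comb_rest_perm) size_cells /snow_left /index_iota subn0.
have sumE : \sum_(q <- undup P | C q && (q != root)) vdist P q = vdist_left H len profile0.
  rewrite -big_filter (perm_big _ comb_rest_perm) big_cells /vdist_left /index_iota subn0.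
  apply: eq_big_seq => j; rewrite mem_iota add0n => jH.
  apply: eq_big_seq => i; rewrite mem_index_iota => /andP[_ il].
  by rewrite vdist_comb ?C_cell // col_of_cell // row_of_cell.
by rewrite /Delta -natr_sum sumE sizeE; apply: cost_bound_rat D_gt0 cost.
Qed.

End ClearComb.

Section CombFrame.
Variables (left : bool) (y0 : int) (H : nat) (c : int) (a : int -> int).
Hypothesis teeth : forall y : int, (y0 <= y)%R -> (y <= y0 + H%:Z - 1)%R ->
  if left then (a y <= c)%R else (c <= a y)%R.

(* [ye + sy * j], [j < H], enumerates the rows of the comb starting from the root row *)
Definition row_frame (ye sy : int) : Prop :=
  [/\ sy = 1%R \/ sy = (-1)%R,
      forall j : nat, j < H -> (y0 <= ye + sy * j%:Z <= y0 + H%:Z - 1)%R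
    & forall y : int, (y0 <= y)%R -> (y <= y0 + H%:Z - 1)%R ->
        absz (y - ye)%R < H /\ (ye + sy * (absz (y - ye)%R)%:Z)%R = y].

Lemma comb_root_frame p : 0 < H -> p = (c, y0) \/ p = (c, y0 + H%:Z - 1)%R ->
  exists ye sy, p = (c, ye) /\ row_frame ye sy.
Proof.
move=> H_gt0; case=> ->; [exists y0, 1%R | exists (y0 + H%:Z - 1)%R, (-1)%R]; split=> //.
  by split=> [|j jH|y y0y yH]; [left | lia | lia].
by split=> [|j jH|y y0y yH]; [right | lia | lia].
Qed.

Lemma in_comb_cells ye sy : row_frame ye sy -> forall x,
  in_comb left y0 H c a x <->
  exists j i, [/\ j < H, i < absz (a (ye + sy * j%:Z)%R - c)%R + 1
                & x = cell c ye (if left then -1 else 1)%R sy j i].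
Proof.
case=> sy_unit rows inv [x1 x2]; rewrite /in_comb /=; split.
  case/and3P=> y0x2 x2H x1_in; have [jH x2E] := inv x2 y0x2 x2H.
  have side := teeth y0x2 x2H.
  exists (absz (x2 - ye)%R), (absz (x1 - c)%R); rewrite x2E /cell; split=> //.
    by case: left x1_in side => /andP[h1 h2] h3; lia.
  by congr pair; case: left x1_in => /andP[h1 h2] /=; lia.
case=> j [i [jH il [-> ->]]]; have /andP[r1 r2] := rows j jH.
have := teeth r1 r2; rewrite r1 r2 /=; move: il.
by move: (a (ye + sy * j%:Z)%R) => A il; case: left => h /=; apply/andP; split; lia.
Qed.

End CombFrame.

Theorem lemma4 (P : seq pixel) (D : nat) (C : pred pixel) (p : pixel)
  (s0 : pixel -> nat) :
  connected_dom P ->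
  (2 <= D)%N ->
  is_comb C p ->
  (forall q, C q -> q \in P) ->
  boundary_pixel P p ->
  (forall q, C q -> vdist P q = (1 + absz (q.1 - p.1)%R + absz (q.2 - p.2)%R)%N) ->
  (forall q, C q -> q != p -> s0 q = 1%N) ->
  s0 p = 0%N ->
  (forall x, x \in P -> (s0 x <= D)%N) ->
  exists ms : seq move,
    [/\ valid_run P D C (p, s0) ms,
        (run P (p, s0) ms).1 = p,
        (forall q, C q -> (run P (p, s0) ms).2 q = 0%N),
        ((4 <= D)%N -> ((size ms)%:R <= 4 * (comb_rest_size P C p)%:R
                                         + 4 * Delta P C p D :> rat)%R) &
        ((D <= 3)%N -> ((size ms)%:R <= 4 * (comb_rest_size P C p)%:R
                                         + 2 * Delta P C p D :> rat)%R)].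
Proof.
move=> _ D_ge2 [left [y0 [H [c [a [H_gt0 teeth C_comb p_root]]]]]] C_sub_P.
case/andP=> _ /hasP[out out_nbrs out_notin] vdist_comb s0_comb s0_p s0_capacity.
have [ye [sy [p_eq frame]]] := comb_root_frame H_gt0 p_root; have [sy_unit _ _] := frame.
pose sx : int := (if left then -1 else 1)%R.
have sx_unit : sx = 1%R \/ sx = (-1)%R by rewrite /sx; case: (left); [right | left].
pose len j := absz (a (ye + sy * j%:Z)%R - c)%R + 1.
have C_cells x : C x <-> exists j i, [/\ j < H, i < len j & x = cell c ye sx sy j i].
  by rewrite C_comb; exact (in_comb_cells teeth frame x).
have root_p : cell c ye sx sy 0 0 = p by rewrite p_eq /cell !mulr0 !addr0.
rewrite -root_p in out_nbrs s0_comb s0_p; rewrite p_eq in vdist_comb.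
have [ms [V pos cleared cost]] := clear_comb sx_unit sy_unit (ltnW D_ge2) H_gt0
  (fun j _ => ltn_addl _ (ltnSn 0) : 0 < len j) C_cells C_sub_P s0_comb s0_p s0_capacity
  out_nbrs out_notin vdist_comb.
rewrite root_p in V pos cleared cost.
have Delta_ge0 : (0 <= Delta P C p D)%R by rewrite /Delta divr_ge0 // sumr_ge0.
by exists ms; split=> // _; lra.
Qed.
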